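(* Let $\Delta$, $A$, $p$ and $V$ be as in the context. If there exists $S=\{s_1,\dots,s_n\}\subset\Gamma$ with $(s_i|s_j)=\langle\alpha_i,\alpha_j\rangle \pmod p$ for all $i,j$ (and $s_i\ne s_j$ for $i\ne j$ if $p=2$), and the rank $m$ of $V$ satisfies $m<n$, then $p$ divides $\det(A)$.
   Context: Let $\Delta\subset\mathbb{R}^n$ be a simply laced root system of full rank (so $\langle\beta,\beta\rangle=2$ for all roots), with simple roots $\alpha_1,\dots,\alpha_n$, and let $A$ be the $n\times n$ integer matrix $A_{ij}=\langle\alpha_i,\alpha_j\rangle$. Let $p\ge2$ be an integer, $V$ a free $\mathbb{Z}/p$-module of rank $m$ with a symmetric bilinear form $(\cdot|\cdot)$ with values in $\mathbb{Z}/p$, and $\Gamma=\{x\in V\setminus\{0\}:(x|x)=2\}$. *)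

From HB Require Import structures.
From mathcomp Require Import all_boot all_order all_algebra.
From mathcomp Require Import reals.
Set Implicit Arguments. Unset Strict Implicit. Unset Printing Implicit Defensive.
Import Order.TTheory GRing.Theory Num.Theory.
Local Open Scope ring_scope.

Definition dotR (R : realType) (n : nat) (u v : 'rV[R]_n) : R :=
  \sum_(i < n) u 0 i * v 0 i.

Definition simply_laced_root_system (R : realType) (n : nat)
    (Delta : seq 'rV[R]_n) : Prop :=
  (0 : 'rV[R]_n) \notin Delta /\ [/\
      (forall v : 'rV[R]_n, exists c : 'I_(size Delta) -> R,
          v = \sum_(k < size Delta) c k *: Delta`_k),
      (forall a b, a \in Delta -> b \in Delta ->
          b - ((2 * dotR b a) / dotR a a) *: a \in Delta),
      (forall a b, a \in Delta -> b \in Delta ->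
          exists z : int, (2 * dotR b a) / dotR a a = z%:~R),
      (forall a (c : R), a \in Delta -> c *: a \in Delta -> c = 1 \/ c = -1)
    &
      (forall b, b \in Delta -> dotR b b = 2)].

Definition simple_roots (R : realType) (n : nat) (Delta : seq 'rV[R]_n)
    (alpha : 'I_n -> 'rV[R]_n) : Prop :=
  [/\ (forall i, alpha i \in Delta),
      (forall c : 'I_n -> R, \sum_(i < n) c i *: alpha i = 0 -> forall i, c i = 0)
    &
      (forall b, b \in Delta -> exists k : 'I_n -> int,
          b = \sum_(i < n) (k i)%:~R *: alpha i /\
          ((forall i, 0 <= k i) \/ (forall i, k i <= 0)))].

Definition symmetric_bilinear (p m : nat) (f : 'rV['Z_p]_m -> 'rV['Z_p]_m -> 'Z_p) : Prop :=
  (forall x y, f x y = f y x) /\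
  (forall (a : 'Z_p) x y z, f (a *: x + y) z = a * f x z + f y z).

Definition Gamma_set (p m : nat) (f : 'rV['Z_p]_m -> 'rV['Z_p]_m -> 'Z_p) (x : 'rV['Z_p]_m) : Prop :=
  x != 0 /\ f x x = 2%:R.

From HB Require Import structures.
From mathcomp Require Import all_boot all_order all_algebra.
From mathcomp Require Import reals.
Import Order.TTheory GRing.Theory Num.Theory.
Local Open Scope ring_scope.

(* In coordinates, a bilinear form on R^m is x |-> x B y^T for the m x m matrix
   B of its values on the unit vectors, so the Gram matrix of s_1, ..., s_n is
   X B X^T with X the n x m matrix of rows s_i.  Reducing mod p, this Gram
   matrix is A, and a product factoring through R^m with m < n is singular
   over any commutative ring. *)

Lemma det_mulmx_thin (R : comPzRingType) (n m : nat)
    (X : 'M[R]_(n, m)) (Y : 'M[R]_(m, n)) :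
  (m < n)%N -> \det (X *m Y) = 0.
Proof.
move=> lt_mn; move: X Y; have [k ->] : exists k, n = (m + k.+1)%N.
  by exists (n - m.+1)%N; rewrite addnS -addSn subnKC.
move=> X Y.
have -> : X *m Y = row_mx X (0 : 'M_(m + k.+1, k.+1)) *m col_mx Y 0.
  by rewrite mul_row_col mul0mx addr0.
rewrite det_mulmx (expand_det_col _ (rshift m (@ord0 k))) big1 ?mul0r // => i _.
by rewrite row_mxEr mxE mul0r.
Qed.

Section BilinearFormMatrix.

Variables (R : comPzRingType) (m : nat) (f : 'rV[R]_m -> 'rV[R]_m -> R).
Hypothesis fC : forall x y, f x y = f y x.
Hypothesis fL : forall a x y z, f (a *: x + y) z = a * f x z + f y z.

Definition form_mx : 'M[R]_m := \matrix_(k, l) f 'e_k 'e_l.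

Lemma form0l z : f 0 z = 0.
Proof.
have := fL 1 0 0 z; rewrite scale1r addr0 mul1r -{1}[f 0 z]add0r.
by move/addIr/esym.
Qed.

Lemma formDl z : {morph f^~ z : x y / x + y}.
Proof. by move=> x y /=; rewrite -[x in LHS]scale1r fL mul1r. Qed.

Lemma formZl a x z : f (a *: x) z = a * f x z.
Proof. by rewrite -[_ *: x]addr0 fL form0l addr0. Qed.

Lemma form_sum_coordl x z : f x z = \sum_(k < m) x 0 k * f 'e_k z.
Proof.
rewrite {1}(row_sum_delta x) (big_morph _ (formDl z) (form0l z)).
by apply: eq_bigr => k _; rewrite formZl.
Qed.

Lemma form_mxE x y : f x y = (x *m form_mx *m y^T) 0 0.
Proof.
rewrite form_sum_coordl -mulmxA mxE; apply: eq_bigr => k _.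
rewrite fC form_sum_coordl mxE; congr (_ * _); apply: eq_bigr => l _.
by rewrite fC !mxE mulrC.
Qed.

Lemma gram_mx_factor n (s : 'I_n -> 'rV[R]_m) :
  \matrix_(i, j) f (s i) (s j) =
    (\matrix_i s i) *m (form_mx *m (\matrix_i s i)^T).
Proof.
apply/matrixP => i j; rewrite mxE form_mxE -mulmxA !mxE.
apply: eq_bigr => k _; rewrite !mxE; congr (_ * _).
by apply: eq_bigr => l _; rewrite !mxE.
Qed.

End BilinearFormMatrix.

Lemma Zp_intr_eq0 (p : nat) (z : int) :
  (1 < p)%N -> ((z%:~R : 'Z_p) == 0) = (p%:Z %| z)%Z.
Proof.
move=> p_gt1; have Zp_nat_eq0 k : ((k%:R : 'Z_p) == 0) = (p %| k)%N.
  by rewrite -val_eqE /= val_Zp_nat.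
by case: z => k; rewrite ?NegzE ?mulrNz ?oppr_eq0 Zp_nat_eq0.
Qed.

Theorem mainTheorem4 (R : realType) (n : nat) (Delta : seq 'rV[R]_n)
    (alpha : 'I_n -> 'rV[R]_n) (A : 'M[int]_n)
    (p m : nat) (f : 'rV['Z_p]_m -> 'rV['Z_p]_m -> 'Z_p)
    (s : 'I_n -> 'rV['Z_p]_m) :
  simply_laced_root_system Delta ->
  simple_roots Delta alpha ->
  (forall i j, (A i j)%:~R = dotR (alpha i) (alpha j)) ->
  (1 < p)%N ->
  symmetric_bilinear f ->
  (forall i, Gamma_set f (s i)) ->
  (forall i j, f (s i) (s j) = (A i j)%:~R) ->
  (p = 2%N -> injective s) ->
  (m < n)%N ->
  (p%:Z %| \det A)%Z.
Proof.
move=> _ _ _ p_gt1 [fC fL] _ gram_s _ lt_mn.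
have A_gram : map_mx intr A = \matrix_(i, j) f (s i) (s j) :> 'M['Z_p]_n.
  by apply/matrixP => i j; rewrite !mxE gram_s.
by rewrite -Zp_intr_eq0 // -det_map_mx A_gram gram_mx_factor // det_mulmx_thin.
Qed.
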